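(* Let $A=(a_{\mathbf i})_{\mathbf i\in[n]^d}$ be a real $d$-tensor, $I\subseteq[d]$, and fix $\mathbf i_I\in[n]^I$. Call a set $C\subseteq[n]^d$ admissible if $\|(A\circ1_C)_{\mathbf i_{I^c}}\|_{\mathcal J}\le\|A_{\mathbf i_{I^c}}\|_{\mathcal J}$ for every real $d$-tensor $A$ and every partition $\mathcal J$ of $I^c$. Then: (1) every generalized row $C=\{\mathbf i: i_{k_1}=j_1,\dots,i_{k_l}=j_l\}$ ($1\le k_1<\dots<k_l\le d$, $j_1,\dots,j_l\in[n]$) is admissible; (2) every generalized diagonal $C=\{\mathbf i: i_k=i_l\ \forall k,l\in K\}$ ($K\subseteq[d]$) is admissible; (3) if $C_1,C_2$ are admissible, so is $C_1\cap C_2$; (4) for every partition $\mathcal K$ of $[d]$ and every partition $\mathcal J$ of $I^c$, $\|(A\circ1_{L(\mathcal K)})_{\mathbf i_{I^c}}\|_{\mathcal J}\le2^{|\mathcal K|(|\mathcal K|-1)/2}\|A_{\mathbf i_{I^c}}\|_{\mathcal J}$; (5) for all $v_1,\dots,v_d\in\mathbb{R}^n$ and every partition $\mathcal J$ of $I^c$, $\|(A\circ\bigotimes_{i=1}^dv_i)_{\mathbf i_{I^c}}\|_{\mathcal J}\le\|A_{\mathbf i_{I^c}}\|_{\mathcal J}\prod_{i=1}^d\|v_i\|_\infty$.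
   Context: $\circ$ denotes the entrywise product, $1_C$ the $0/1$ indicator tensor of $C\subseteq[n]^d$, $(v_1\otimes\cdots\otimes v_d)_{\mathbf i}=\prod_j(v_j)_{i_j}$. For $\mathcal K=\{K_1,\dots,K_a\}$ a partition of $[d]$, $L(\mathcal K)=\{\mathbf i\in[n]^d:i_k=i_l\iff\exists j:k,l\in K_j\}$. $B_{\mathbf i_{I^c}}$ is the tensor indexed by $[n]^{I^c}$ obtained from a $d$-tensor $B$ by fixing the indices in $I$ to $\mathbf i_I$. For a tensor $B$ indexed by $[n]^S$ and a partition $\mathcal J=\{J_1,\dots,J_k\}$ of $S$, $\|B\|_{\mathcal J}:=\sup\{\sum_{\mathbf i\in[n]^S}b_{\mathbf i}\prod_lx^{(l)}_{\mathbf i_{J_l}}:x^{(l)}\in\mathbb{R}^{[n]^{J_l}},\|x^{(l)}\|_2\le1\}$. If $I=[d]$, the only partition of $I^c$ is the empty one and the norm is $|a_{\mathbf i}|$. *)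

From HB Require Import structures.
From mathcomp Require Import all_boot.
From Stdlib Require Import Reals ClassicalEpsilon.

Set Implicit Arguments.
Unset Strict Implicit.
Unset Printing Implicit Defensive.

HB.instance Definition _ :=
  Monoid.isComLaw.Build R 0%R Rplus (fun a b c : R => esym (Rplus_assoc a b c : (a + b + c)%R = (a + (b + c))%R)) Rplus_comm Rplus_0_l.
HB.instance Definition _ :=
  Monoid.isComLaw.Build R 1%R Rmult (fun a b c : R => esym (Rmult_assoc a b c : (a * b * c)%R = (a * (b * c))%R)) Rmult_comm Rmult_1_l.

(* Supremum of a set of reals (least upper bound when it exists, else 0). *)
Definition Rsup (E : R -> Prop) : R :=
  match excluded_middle_informative (bound E /\ exists x, E x) with
  | left H => proj1_sig (completeness E (proj1 H) (proj2 H))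
  | right _ => 0%R
  end.

Definition Idx (n d : nat) := {ffun 'I_d -> 'I_n}.
Definition SIdx (n d : nat) (S : {set 'I_d}) := {ffun {i : 'I_d | i \in S} -> 'I_n}.

Definition tensor (n d : nat) := Idx n d -> R.

Definition hadamard n d (A B : tensor n d) : tensor n d := fun i => (A i * B i)%R.
Definition indic n d (C : {set Idx n d}) : tensor n d :=
  fun i => if i \in C then 1%R else 0%R.
Definition tprod n d (v : 'I_d -> 'I_n -> R) : tensor n d :=
  fun i => \big[Rmult/1%R]_(k < d) v k (i k).

Definition infnorm n (v : 'I_n -> R) : R := \big[Rmax/0%R]_(j < n) Rabs (v j).

(* The full index obtained from i0 (used on S^c) and ii (on S). *)
Definition ext n d (i0 : Idx n d) (S : {set 'I_d}) (ii : SIdx n S) : Idx n d :=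
  [ffun k => if (insub k : option {i : 'I_d | i \in S}) is Some k' then ii k'
             else i0 k].

Definition restr n d (f : Idx n d) (T : {set 'I_d}) : SIdx n T :=
  [ffun k => f (val k)].

(* ||A_{i_{I^c}}||_J : the norm of the slice of A obtained by fixing the
   coordinates in I to those of i0, w.r.t. a partition J of I^c.
   If I^c is empty, this is |a_{i0}|. *)
Definition sliceNorm n d (I : {set 'I_d}) (i0 : Idx n d) (A : tensor n d)
  (J : {set {set 'I_d}}) : R :=
  if ~: I == set0 then Rabs (A i0) else
  Rsup (fun v => exists x : forall T : {set 'I_d}, SIdx n T -> R,
     (forall T, T \in J -> (\big[Rplus/0%R]_(y : SIdx n T) (x T y ^ 2) <= 1)%R) /\
     v = \big[Rplus/0%R]_(ii : SIdx n (~: I))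
            (A (ext i0 ii) * \big[Rmult/1%R]_(T in J) x T (restr (ext i0 ii) T))%R).

(* Admissible sets C (relative to I and i_I = i0 restricted to I). *)
Definition admissible n d (I : {set 'I_d}) (i0 : Idx n d) (C : {set Idx n d}) :=
  forall (A : tensor n d) (J : {set {set 'I_d}}), partition J (~: I) ->
    (sliceNorm I i0 (hadamard A (indic C)) J <= sliceNorm I i0 A J)%R.

Definition genRow n d (K : {set 'I_d}) (j : 'I_d -> 'I_n) : {set Idx n d} :=
  [set i : Idx n d | [forall k in K, i k == j k]].

Definition genDiag n d (K : {set 'I_d}) : {set Idx n d} :=
  [set i : Idx n d | [forall k in K, forall l in K, i k == i l]].

Definition Lset n d (Kp : {set {set 'I_d}}) : {set Idx n d} :=
  [set i : Idx n d | [forall k, forall l,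
     (i k == i l) == [exists T in Kp, (k \in T) && (l \in T)]]].

(* For a partition J of I^c, the slice norm ||A_{i_{I^c}}||_J is the supremum of
   the pairings of the slice with products of unit test vectors, one per block
   of J.  Call f a multiplier of norm c if, for all B,
   ||(B o f)_{i_{I^c}}||_J <= c ||B_{i_{I^c}}||_J; C is admissible iff 1_C is a multiplier of norm 1 for every J.

   The proof rests on one observation: a tensor product of vectors bounded by 1
   is a multiplier of norm 1, since its factors can be absorbed into the test
   vectors (and the factors on the fixed coordinates I into one block).  This
   gives (5) after normalisation.  Multipliers are closed under sums, products
   and scalings (the slice norm is a seminorm), so the Kronecker delta
   [i_k = i_l] = 2^-n sum_e e(i_k) e(i_l), over sign patterns e, has norm 1.
   Generalised rows and diagonals are products of such factors, giving (1), (2);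
   (3) is closure under products; and (4) writes 1_{L(K)} as the product of the
   block diagonals with one factor 1 - 1_{diag(T u T')}, of norm 2, for each
   pair of distinct blocks T, T'. *)

From HB Require Import structures.
From mathcomp Require Import all_boot.
From Stdlib Require Import Reals Lra FunctionalExtensionality ClassicalEpsilon.
Set Implicit Arguments.
Unset Strict Implicit.
Unset Printing Implicit Defensive.

Lemma genDiagP n d (K : {set 'I_d}) (i : Idx n d) :
  reflect {in K &, forall k l, i k = i l} (i \in genDiag n K).
Proof.
rewrite inE; apply: (iffP forall_inP) => [H k l kK lK|H k kK].
  by apply/eqP; move/forall_inP: (H k kK); apply.
by apply/forall_inP => l lK; apply/eqP; apply: H.
Qed.

Lemma Lset_pblock n d (Kp : {set {set 'I_d}}) (i : Idx n d) :
  partition Kp [set: 'I_d] ->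
  (i \in Lset n Kp) = [forall k, forall l, (i k == i l) == (pblock Kp k == pblock Kp l)].
Proof.
case/and3P=> /eqP cover_all triv _.
have inB k : k \in cover Kp by rewrite cover_all inE.
have same k l : [exists T in Kp, (k \in T) && (l \in T)] = (pblock Kp k == pblock Kp l).
  rewrite eq_pblock //; apply/existsP/idP => [[T /and3P [TK kT lT]]|lB].
    by rewrite (def_pblock triv TK kT).
  by exists (pblock Kp k); rewrite pblock_mem // mem_pblock inB.
by rewrite inE; apply: eq_forallb => k; apply: eq_forallb => l; rewrite same.
Qed.

Lemma Lset_blocks n d (Kp : {set {set 'I_d}}) (i : Idx n d) :
  partition Kp [set: 'I_d] ->
  (i \in Lset n Kp) =
  [forall T in Kp, i \in genDiag n T] &&
  [forall T in Kp, forall T' in Kp, (T != T') ==> (i \notin genDiag n (T :|: T'))].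
Proof.
move=> HK; rewrite Lset_pblock //; move: HK => /and3P [/eqP cover_all triv nz].
have inB k : k \in cover Kp by rewrite cover_all inE.
have BK k : pblock Kp k \in Kp by apply: pblock_mem.
have kB k : k \in pblock Kp k by rewrite mem_pblock.
have Bdef T k : T \in Kp -> k \in T -> pblock Kp k = T by apply: def_pblock.
have ne T : T \in Kp -> exists k, k \in T.
  by move=> TK; apply/set0Pn; apply: contraNneq nz => <-.
apply/forallP/andP => [E|[/forall_inP D /forall_inP U]].
  have {}E k l : (i k == i l) = (pblock Kp k == pblock Kp l).
    by move/forallP: (E k) => /(_ l) /eqP.
  split; apply/forall_inP => T TK.
    apply/genDiagP => k l kT lT; apply/eqP.
    by rewrite E (Bdef T k) ?(Bdef T l).
  apply/forall_inP => T' T'K; apply/implyP => neqT; apply/genDiagP => Hd.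
  have [k kT] := ne T TK; have [l lT'] := ne T' T'K.
  have : i k == i l by apply/eqP; apply: Hd; rewrite inE ?kT ?lT' ?orbT.
  by rewrite E (Bdef T k) // (Bdef T' l) // (negbTE neqT).
move=> k; apply/forallP => l; apply/eqP.
have /genDiagP Dk := D _ (BK k); have /genDiagP Dl := D _ (BK l).
case: (eqVneq (pblock Kp k) (pblock Kp l)) => [eqB|neqB].
  by rewrite (Dk k l) ?eqxx // eqB.
apply/negP => /eqP ikl; move: (forall_inP (U _ (BK k)) _ (BK l)).
rewrite neqB => /negP; apply; apply/genDiagP => p q.
have val r : r \in pblock Kp k :|: pblock Kp l -> i r = i k.
  by rewrite inE => /orP [] rB; [apply: Dk | rewrite ikl; apply: Dl].
by move=> /val -> /val ->.
Qed.

Lemma distinct_pairs_enum (T : finType) (A : {set T}) (x0 : T) (P : T -> T -> bool) :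
  (forall x y, P x y = P y x) ->
  [forall x in A, forall y in A, (x != y) ==> P x y] =
  [forall b : 'I_#|A|, forall a : 'I_b, P (nth x0 (enum A) a) (nth x0 (enum A) b)].
Proof.
move=> Psym; set s := enum A.
have size_s : size s = #|A| by rewrite cardE.
have nth_in a : a < #|A| -> nth x0 s a \in A by move=> ?; rewrite -mem_enum mem_nth ?size_s.
apply/forall_inP/forallP => [H b|H x xA].
  apply/forallP => a; have ab : a < b := ltn_ord a.
  have aA : a < #|A| := ltn_trans ab (ltn_ord b).
  move/forall_inP: (H _ (nth_in _ aA)) => /(_ _ (nth_in _ (ltn_ord b))) /implyP; apply.
  by rewrite nth_uniq ?size_s ?enum_uniq // (ltn_eqF ab).
apply/forall_inP => y yA; apply/implyP => neq_xy.
have idx z : z \in A -> index z s < #|A| /\ nth x0 s (index z s) = z.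
  by move=> zA; rewrite -size_s index_mem nth_index mem_enum.
have [[ix ex] [iy ey]] := (idx x xA, idx y yA).
case: (ltngtP (index x s) (index y s)) => [lt_xy|lt_yx|eq_xy].
- by move/forallP: (H (Ordinal iy)) => /(_ (Ordinal lt_xy)); rewrite /= ex ey.
- by move/forallP: (H (Ordinal ix)) => /(_ (Ordinal lt_yx)); rewrite /= ex ey Psym.
- by move: neq_xy; rewrite -ex eq_xy ey eqxx.
Qed.

Local Open Scope R_scope.

Lemma sum_le (X : Type) (r : seq X) (P : pred X) (F G : X -> R) :
  (forall x, P x -> F x <= G x) ->
  \big[Rplus/0]_(x <- r | P x) F x <= \big[Rplus/0]_(x <- r | P x) G x.
Proof. by move=> FG; apply: (big_ind2 (fun a b => a <= b)) => // *; lra. Qed.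

Lemma sum_ge0 (X : Type) (r : seq X) (P : pred X) (F : X -> R) :
  (forall x, P x -> 0 <= F x) -> 0 <= \big[Rplus/0]_(x <- r | P x) F x.
Proof. by move=> F0; apply: (big_ind (fun a => 0 <= a)) => // *; lra. Qed.

Lemma sum_scal (X : Type) (r : seq X) (P : pred X) (F : X -> R) a :
  a * \big[Rplus/0]_(x <- r | P x) F x = \big[Rplus/0]_(x <- r | P x) (a * F x).
Proof.
apply: (big_ind2 (fun u v => a * u = v)) => [|x1 x2 y1 y2 <- <-|] //; ring.
Qed.

Lemma prod_ge0 (X : Type) (r : seq X) (P : pred X) (F : X -> R) :
  (forall x, P x -> 0 <= F x) -> 0 <= \big[Rmult/1]_(x <- r | P x) F x.
Proof. by move=> F0; apply: (big_ind (fun a => 0 <= a)) => // *; nra. Qed.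

Lemma prod_abs_le1 (X : Type) (r : seq X) (P : pred X) (F : X -> R) :
  (forall x, P x -> Rabs (F x) <= 1) -> Rabs (\big[Rmult/1]_(x <- r | P x) F x) <= 1.
Proof.
move=> F1; apply: (big_ind (fun a => Rabs a <= 1)) => //; first by rewrite Rabs_R1; lra.
move=> a b Ha Hb; rewrite Rabs_mult; have := Rabs_pos a; have := Rabs_pos b; nra.
Qed.

Lemma term_le_sum (T : finType) (F : T -> R) (y : T) :
  (forall x, 0 <= F x) -> F y <= \big[Rplus/0]_(x : T) F x.
Proof.
move=> F0; rewrite (bigD1 y) //=.
have : 0 <= \big[Rplus/0]_(x | x != y) F x by apply: sum_ge0.
lra.
Qed.

Lemma prod_indicator (T : finType) (P b : pred T) :
  \big[Rmult/1]_(x | P x) (if b x then 1 else 0) =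
  if [forall x, P x ==> b x] then 1 else 0.
Proof.
case: forallP => [Pb|/forallP/forallPn [x]].
  by apply: big1 => x Px; move/implyP: (Pb x) => /(_ Px) ->.
by rewrite negb_imply => /andP [Px /negbTE bx]; rewrite (bigD1 x) //= bx Rmult_0_l.
Qed.

Lemma indicator_andb (a b : bool) :
  (if a then 1 else 0) * (if b then 1 else 0) = if a && b then 1 else 0.
Proof. by case: a; case: b => /=; ring. Qed.

Lemma sum_const1 (T : finType) : \big[Rplus/0]_(e : T) 1 = INR #|T|.
Proof.
rewrite big_const; elim: #|T| => [|k IH] //.
by rewrite iterS IH S_INR; ring.
Qed.

Lemma sq_le1 z : Rabs z <= 1 -> z ^ 2 <= 1.
Proof. by move=> z1; rewrite -pow2_abs; have := Rabs_pos z; nra. Qed.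

Lemma infnorm_ge0 m (v : 'I_m -> R) : 0 <= infnorm v.
Proof.
apply: (big_ind (fun z => 0 <= z)) => [|a b a0 _|j _]; [lra | | exact: Rabs_pos].
exact: Rle_trans a0 (Rmax_l _ _).
Qed.

Lemma big_Rmax_ge (X : eqType) (r : seq X) (F : X -> R) a :
  a \in r -> F a <= \big[Rmax/0]_(j <- r) F j.
Proof.
elim: r => [//|t r IH]; rewrite inE big_cons => /orP [/eqP ->|ar].
  exact: Rmax_l.
exact: Rle_trans (IH ar) (Rmax_r _ _).
Qed.

Lemma infnorm_ge m (v : 'I_m -> R) a : Rabs (v a) <= infnorm v.
Proof. exact: (big_Rmax_ge (fun j => Rabs (v j)) (mem_index_enum a)). Qed.

Lemma Rsup_lub (E : R -> Prop) : bound E -> (exists x, E x) -> is_lub E (Rsup E).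
Proof.
rewrite /Rsup => Eb Ene; case: excluded_middle_informative => [H|[]] //.
by case: completeness.
Qed.

Definition sgn (b : bool) : R := if b then 1 else -1.

Lemma sign_sum m (a b : 'I_m) :
  \big[Rplus/0]_(e : {ffun 'I_m -> bool}) (sgn (e a) * sgn (e b)) =
  if a == b then INR #|{ffun 'I_m -> bool}| else 0.
Proof.
case: eqVneq => [<-|neq_ab].
  by rewrite -sum_const1; apply: eq_bigr => e _; rewrite /sgn; case: (e a); ring.
pose flip (e : {ffun 'I_m -> bool}) := [ffun c => if c == a then ~~ e c else e c].
have flipK : involutive flip.
  by move=> e; apply/ffunP => c; rewrite !ffunE; case: (c == a); rewrite ?negbK.
set S := \big[Rplus/0]_(e : {ffun 'I_m -> bool}) _.
suff : S = -1 * S by lra.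
rewrite {1}/S (reindex_inj (inv_inj flipK)) /= /S sum_scal.
apply: eq_bigr => e _; rewrite !ffunE eqxx eq_sym (negbTE neq_ab).
by rewrite /sgn; case: (e a); case: (e b) => /=; ring.
Qed.

Section SliceNorm.
Variables (n d : nat) (I : {set 'I_d}) (i0 : Idx n d) (J : {set {set 'I_d}}).
Hypothesis HJ : partition J (~: I).

Local Notation snorm B := (sliceNorm I i0 B J).

Definition family := forall T : {set 'I_d}, SIdx n T -> R.

Definition unit_family (x : family) :=
  forall T, T \in J -> \big[Rplus/0]_(y : SIdx n T) (x T y ^ 2) <= 1.

Definition pairing (B : tensor n d) (x : family) :=
  \big[Rplus/0]_(ii : SIdx n (~: I))
     (B (ext i0 ii) * \big[Rmult/1]_(T in J) x T (restr (ext i0 ii) T)).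

Lemma some_block : ~: I != set0 -> exists T1, T1 \in J.
Proof.
case/and3P: HJ => /eqP coverJ _ _ /set0Pn [k kI].
by exists (pblock J k); rewrite pblock_mem // coverJ.
Qed.

Lemma unit_family_abs x T y : unit_family x -> T \in J -> Rabs (x T y) <= 1.
Proof.
move=> x1 TJ; have : x T y ^ 2 <= 1.
  apply: Rle_trans (x1 T TJ).
  apply: (@term_le_sum {ffun {i : 'I_d | i \in T} -> 'I_n} (fun y => x T y ^ 2)) => z.
  exact: pow2_ge_0.
rewrite -pow2_abs; have := Rabs_pos (x T y); nra.
Qed.

(* The pairings are bounded, so the supremum defining the norm exists. *)
Lemma pairing_le_l1 B x : unit_family x ->
  pairing B x <= \big[Rplus/0]_(ii : SIdx n (~: I)) Rabs (B (ext i0 ii)).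
Proof.
move=> x1; apply: sum_le => ii _; set p := \big[Rmult/1]_(T in J) _.
have p1 : Rabs p <= 1 by apply: prod_abs_le1 => T TJ; apply: unit_family_abs.
apply: Rle_trans (Rle_abs _) _; rewrite Rabs_mult.
have := Rabs_pos (B (ext i0 ii)); have := Rabs_pos p; nra.
Qed.

Definition zero_family : family := fun _ _ => 0.

Lemma unit_zero_family : unit_family zero_family.
Proof. by move=> T _; rewrite big1 => [|y _]; rewrite /zero_family /=; lra. Qed.

Lemma snorm_lub B : ~: I != set0 ->
  is_lub (fun v => exists x, unit_family x /\ v = pairing B x) (snorm B).
Proof.
move=> nonempty; rewrite /sliceNorm (negbTE nonempty); apply: Rsup_lub.
  exists (\big[Rplus/0]_(ii : SIdx n (~: I)) Rabs (B (ext i0 ii))).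
  by move=> v [x [x1 ->]]; apply: pairing_le_l1.
by exists (pairing B zero_family), zero_family; split => //; apply: unit_zero_family.
Qed.

Lemma pairing_le_snorm B x : ~: I != set0 -> unit_family x -> pairing B x <= snorm B.
Proof. by move=> nonempty x1; case: (snorm_lub B nonempty) => ub _; apply: ub; exists x. Qed.

Lemma snorm_le B M : ~: I != set0 ->
  (forall x, unit_family x -> pairing B x <= M) -> snorm B <= M.
Proof.
move=> nonempty HM; case: (snorm_lub B nonempty) => _; apply.
by move=> v [x [x1 ->]]; apply: HM.
Qed.

Lemma snorm_empty B : ~: I == set0 -> snorm B = Rabs (B i0).
Proof. by move=> empty; rewrite /sliceNorm empty. Qed.

Definition scale_block (T1 : {set 'I_d}) (c : R) (x : family) : family :=
  fun T y => if T == T1 then c * x T y else x T y.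

Lemma pairing_scale_block T1 c B x : T1 \in J ->
  pairing B (scale_block T1 c x) = c * pairing B x.
Proof.
move=> T1J; rewrite /pairing sum_scal; apply: eq_bigr => ii _.
rewrite (bigD1 T1) //= [in RHS](bigD1 T1) //= /scale_block eqxx.
rewrite (eq_bigr (fun T => x T (restr (ext i0 ii) T))) => [|T /andP [_ /negbTE ->]] //.
ring.
Qed.

Lemma unit_scale_block T1 c x : c ^ 2 <= 1 -> unit_family x ->
  unit_family (scale_block T1 c x).
Proof.
move=> c1 x1 T TJ; apply: Rle_trans (x1 T TJ); apply: sum_le => y _.
rewrite /scale_block; case: (T == T1); last lra.
have := pow2_ge_0 (x T y); rewrite Rpow_mult_distr; nra.
Qed.

(* Flipping the sign of one block shows that the norm also bounds |pairing|. *)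
Lemma pairing_abs_le_snorm B x : ~: I != set0 -> unit_family x ->
  Rabs (pairing B x) <= snorm B.
Proof.
move=> nonempty x1; have [T1 T1J] := some_block nonempty.
have flipped : pairing B (scale_block T1 (-1) x) <= snorm B.
  by apply: pairing_le_snorm => //; apply: unit_scale_block => //=; lra.
rewrite pairing_scale_block // in flipped.
by have := pairing_le_snorm B nonempty x1; move=> ?; apply: Rabs_le; lra.
Qed.

Lemma pairing_add B1 B2 x :
  pairing (fun i => B1 i + B2 i) x = pairing B1 x + pairing B2 x.
Proof. by rewrite /pairing -big_split; apply: eq_bigr => ii _ /=; ring. Qed.

Lemma pairing_scal a B x : pairing (fun i => a * B i) x = a * pairing B x.
Proof. by rewrite /pairing sum_scal; apply: eq_bigr => ii _ /=; ring. Qed.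

Lemma snorm_add B1 B2 : snorm (fun i => B1 i + B2 i) <= snorm B1 + snorm B2.
Proof.
have [empty|nonempty] := boolP (~: I == set0).
  by rewrite !snorm_empty //; apply: Rabs_triang.
apply: snorm_le => // x x1; rewrite pairing_add.
have := pairing_le_snorm B1 nonempty x1; have := pairing_le_snorm B2 nonempty x1.
lra.
Qed.

Lemma snorm_scal a B : snorm (fun i => a * B i) <= Rabs a * snorm B.
Proof.
have [empty|nonempty] := boolP (~: I == set0).
  by rewrite !snorm_empty // Rabs_mult; lra.
apply: snorm_le => // x x1; rewrite pairing_scal.
apply: Rle_trans (Rle_abs _) _; rewrite Rabs_mult.
apply: Rmult_le_compat_l; [exact: Rabs_pos | exact: pairing_abs_le_snorm].
Qed.

Definition multiplier (f : tensor n d) (c : R) :=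
  forall B : tensor n d, snorm (hadamard B f) <= c * snorm B.

Lemma multiplier_ext f g c : (forall i, f i = g i) -> multiplier f c -> multiplier g c.
Proof. by move=> fg; rewrite (functional_extensionality f g fg). Qed.

Lemma multiplier_one : multiplier (fun _ => 1) 1.
Proof.
move=> B; rewrite Rmult_1_l; apply: Req_le; congr sliceNorm.
by apply: functional_extensionality => i; rewrite /hadamard Rmult_1_r.
Qed.

Lemma multiplier_mul f g c c' : 0 <= c -> multiplier f c -> multiplier g c' ->
  multiplier (fun i => f i * g i) (c * c').
Proof.
move=> c0 Hf Hg B.
have -> : hadamard B (fun i => f i * g i) = hadamard (hadamard B g) f.
  by apply: functional_extensionality => i; rewrite /hadamard; ring.
by apply: Rle_trans (Hf _) _; rewrite Rmult_assoc; apply: Rmult_le_compat_l.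
Qed.

Lemma multiplier_add f g c c' : multiplier f c -> multiplier g c' ->
  multiplier (fun i => f i + g i) (c + c').
Proof.
move=> Hf Hg B.
have -> : hadamard B (fun i => f i + g i) = (fun i => hadamard B f i + hadamard B g i).
  by apply: functional_extensionality => i; rewrite /hadamard; ring.
by apply: Rle_trans (snorm_add _ _) _; have := Hf B; have := Hg B; lra.
Qed.

Lemma multiplier_scal a f c : multiplier f c -> multiplier (fun i => a * f i) (Rabs a * c).
Proof.
move=> Hf B.
have -> : hadamard B (fun i => a * f i) = (fun i => a * hadamard B f i).
  by apply: functional_extensionality => i; rewrite /hadamard; ring.
apply: Rle_trans (snorm_scal _ _) _; rewrite Rmult_assoc.
by apply: Rmult_le_compat_l; [exact: Rabs_pos | exact: Hf].
Qed.

Lemma multiplier_sum (X : Type) (r : seq X) (P : pred X) (F : X -> tensor n d) (c : X -> R) :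
  (forall t, P t -> multiplier (F t) (c t)) ->
  multiplier (fun i => \big[Rplus/0]_(t <- r | P t) F t i) (\big[Rplus/0]_(t <- r | P t) c t).
Proof.
move=> HF; elim: r => [|t r IH].
  have := multiplier_scal 0 multiplier_one; rewrite Rabs_R0 big_nil.
  by rewrite Rmult_0_l; apply: multiplier_ext => i; rewrite big_nil.
rewrite big_cons; case: (boolP (P t)) => Pt.
  by apply: multiplier_ext (multiplier_add (HF t Pt) IH) => i; rewrite big_cons Pt.
by apply: multiplier_ext IH => i; rewrite big_cons (negbTE Pt).
Qed.

Lemma multiplier_prod (X : Type) (r : seq X) (P : pred X) (F : X -> tensor n d) (c : X -> R) :
  (forall t, P t -> multiplier (F t) (c t)) -> (forall t, P t -> 0 <= c t) ->
  multiplier (fun i => \big[Rmult/1]_(t <- r | P t) F t i) (\big[Rmult/1]_(t <- r | P t) c t).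
Proof.
move=> HF c0; elim: r => [|t r IH].
  by rewrite big_nil; apply: multiplier_ext multiplier_one => i; rewrite big_nil.
rewrite big_cons; case: (boolP (P t)) => Pt.
  apply: multiplier_ext (multiplier_mul (c0 t Pt) (HF t Pt) IH) => i.
  by rewrite big_cons Pt.
by apply: multiplier_ext IH => i; rewrite big_cons (negbTE Pt).
Qed.

Definition block_weight (w : 'I_d -> 'I_n -> R) (T : {set 'I_d}) (y : SIdx n T) : R :=
  \big[Rmult/1]_(k : {i : 'I_d | i \in T}) w (val k) (y k).

Lemma block_weight_restr w T (f : Idx n d) :
  block_weight w (restr f T) = \big[Rmult/1]_(k in T) w k (f k).
Proof. by rewrite /block_weight [RHS]big_sub; apply: eq_bigr => k _; rewrite ffunE. Qed.

Lemma tprod_ext_split w (ii : SIdx n (~: I)) :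
  tprod w (ext i0 ii) = \big[Rmult/1]_(k in I) w k (i0 k) *
     \big[Rmult/1]_(T in J) block_weight w (restr (ext i0 ii) T).
Proof.
case/and3P: HJ => /eqP coverJ trivJ _.
rewrite /tprod (bigID (mem I)) /=; congr (_ * _).
  by apply: eq_bigr => k kI; rewrite /ext ffunE insubN // inE kI.
under [RHS]eq_bigr => T _ do rewrite block_weight_restr.
by rewrite -big_trivIset // coverJ; apply: eq_bigl => k; rewrite inE.
Qed.

(* Key step: a tensor product of vectors bounded by 1 is a multiplier of norm 1,
   since its factors can be absorbed into the test vectors of the blocks of J. *)
Lemma multiplier_contraction w : (forall k a, Rabs (w k a) <= 1) -> multiplier (tprod w) 1.
Proof.
move=> w1 B; rewrite Rmult_1_l.
have [empty|nonempty] := boolP (~: I == set0).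
  rewrite !snorm_empty // /hadamard Rabs_mult.
  have : Rabs (tprod w i0) <= 1 by apply: prod_abs_le1.
  by have := Rabs_pos (B i0); have := Rabs_pos (tprod w i0); nra.
apply: snorm_le => // x x1; have [T1 T1J] := some_block nonempty.
set c0 := \big[Rmult/1]_(k in I) w k (i0 k).
pose x' := scale_block T1 c0 (fun T y => x T y * block_weight w y).
have x'1 : unit_family x'.
  apply: unit_scale_block; first by apply/sq_le1/prod_abs_le1.
  move=> T TJ; apply: Rle_trans (x1 T TJ); apply: sum_le => y _.
  have /sq_le1 : Rabs (block_weight w y) <= 1 by apply: prod_abs_le1.
  by rewrite Rpow_mult_distr; have := pow2_ge_0 (x T y); nra.
have -> : pairing (hadamard B (tprod w)) x = pairing B x'.
  rewrite pairing_scale_block // /pairing sum_scal; apply: eq_bigr => ii _.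
  by rewrite /hadamard tprod_ext_split -/c0 big_split /=; ring.
exact: pairing_le_snorm.
Qed.

(* Part (5): normalise each v k by its sup norm and apply the contraction case. *)
Lemma multiplier_tprod v : multiplier (tprod v) (\big[Rmult/1]_(k < d) infnorm (v k)).
Proof.
pose w k a := v k a / infnorm (v k).
have w1 k a : Rabs (w k a) <= 1.
  have := infnorm_ge (v k) a; have := infnorm_ge0 (v k); rewrite /w.
  case: (Req_dec (infnorm (v k)) 0) => [-> _ _|nz ? ?].
    by rewrite /Rdiv Rinv_0 Rmult_0_r Rabs_R0; lra.
  have m0 : 0 < / infnorm (v k) by apply: Rinv_0_lt_compat; lra.
  by have := Rinv_r _ nz; rewrite Rabs_mult (Rabs_pos_eq (/ _)); nra.
have vw k a : v k a = infnorm (v k) * w k a.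
  rewrite /w; case: (Req_dec (infnorm (v k)) 0) => [m0|nz]; last by field.
  have := infnorm_ge (v k) a; rewrite m0 Rmult_0_l.
  by case: (Req_dec (v k a) 0) => // /Rabs_no_R0; have := Rabs_pos (v k a); lra.
have := multiplier_scal (\big[Rmult/1]_(k < d) infnorm (v k)) (multiplier_contraction w1).
rewrite Rabs_pos_eq ?Rmult_1_r; last by apply: prod_ge0 => k _; apply: infnorm_ge0.
apply: multiplier_ext => i; rewrite /tprod -big_split.
by apply: eq_bigr => k _; rewrite [RHS]vw.
Qed.

Lemma multiplier_coord k (h : 'I_n -> R) : (forall a, Rabs (h a) <= 1) ->
  multiplier (fun i => h (i k)) 1.
Proof.
move=> h1; pose w m a := if m == k then h a else 1.
have w1 m a : Rabs (w m a) <= 1.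
  by rewrite /w; case: (m == k); [exact: h1 | rewrite Rabs_R1; lra].
apply: multiplier_ext (multiplier_contraction w1) => i.
by rewrite /tprod (bigD1 k) //= /w eqxx big1 ?Rmult_1_r // => m /negbTE ->.
Qed.

(* The Kronecker delta in two coordinates, written as an average of products
   of two bounded single-coordinate multipliers. *)
Lemma multiplier_delta k l : multiplier (fun i => if i k == i l then 1 else 0) 1.
Proof.
set N := INR #|{ffun 'I_n -> bool}|.
have N0 : 0 < N by apply/lt_0_INR/ltP/card_gt0P; exists [ffun=> true].
have sgn1 (e : {ffun 'I_n -> bool}) a : Rabs (sgn (e a)) <= 1.
  by rewrite /sgn; case: (e a); rewrite ?Rabs_Ropp Rabs_R1; lra.
have avg : multiplier (fun i => \big[Rplus/0]_(e : {ffun 'I_n -> bool})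
                                 (sgn (e (i k)) * sgn (e (i l)))) N.
  rewrite /N -sum_const1; apply: multiplier_sum => e _.
  have := multiplier_mul Rle_0_1 (multiplier_coord k (sgn1 e)) (multiplier_coord l (sgn1 e)).
  by rewrite Rmult_1_l.
have invN : 0 <= / N by apply/Rlt_le/Rinv_0_lt_compat.
have := multiplier_scal (/ N) avg; rewrite Rabs_pos_eq // Rinv_l; last lra.
apply: multiplier_ext => i; rewrite sign_sum -/N.
by case: (_ == _); [field | ring]; lra.
Qed.

(* Part (1): 1_C for a generalised row is a product of coordinate indicators. *)
Lemma multiplier_row K (j : 'I_d -> 'I_n) : multiplier (indic (genRow K j)) 1.
Proof.
have : multiplier (fun i => \big[Rmult/1]_(k in K) (if i k == j k then 1 else 0))
                  (\big[Rmult/1]_(k in K) 1).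
  apply: multiplier_prod => [k _|]; last by move=> *; lra.
  apply: (@multiplier_coord k (fun a => if a == j k then 1 else 0)) => a.
  by case: (_ == _); rewrite ?Rabs_R1 ?Rabs_R0; lra.
rewrite big1_eq; apply: multiplier_ext => i.
by rewrite prod_indicator /indic inE.
Qed.

(* Part (2): 1_C for a generalised diagonal is a product of deltas. *)
Lemma multiplier_diag K : multiplier (indic (genDiag n K)) 1.
Proof.
have : multiplier (fun i => \big[Rmult/1]_(k in K) \big[Rmult/1]_(l in K)
                              (if i k == i l then 1 else 0))
                  (\big[Rmult/1]_(k in K) \big[Rmult/1]_(l in K) 1).
  apply: multiplier_prod => [k _|k _]; last by rewrite big1_eq; lra.
  by apply: multiplier_prod => [l _|l _]; [apply: multiplier_delta | lra].
rewrite (eq_bigr (fun _ => 1)) => [|k _]; last exact: big1_eq.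
rewrite big1_eq; apply: multiplier_ext => i.
by under eq_bigr => k _ do rewrite prod_indicator; rewrite prod_indicator /indic inE.
Qed.

Lemma multiplier_compl_diag K : multiplier (fun i => 1 - indic (genDiag n K) i) 2.
Proof.
have := multiplier_add multiplier_one (multiplier_scal (-1) (multiplier_diag K)).
rewrite Rabs_Ropp Rabs_R1 (_ : 1 + 1 * 1 = 2); last ring.
by apply: multiplier_ext => i; ring.
Qed.

(* Part (4): 1_{L(K)} is the product of the block diagonals and of the
   complements of the diagonals of the unions of two distinct blocks. *)
Lemma multiplier_Lset Kp : partition Kp [set: 'I_d] ->
  multiplier (indic (Lset n Kp))
    (\big[Rmult/1]_(b < #|Kp|) \big[Rmult/1]_(a < b) 2).
Proof.
move=> HK; set blk := nth set0 (enum Kp).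
have diags : multiplier (fun i => \big[Rmult/1]_(T in Kp) indic (genDiag n T) i)
                        (\big[Rmult/1]_(T in Kp) 1).
  by apply: multiplier_prod => [T _|T _]; [apply: multiplier_diag | lra].
have separations : multiplier
    (fun i => \big[Rmult/1]_(b < #|Kp|) \big[Rmult/1]_(a < b)
                (1 - indic (genDiag n (blk a :|: blk b)) i))
    (\big[Rmult/1]_(b < #|Kp|) \big[Rmult/1]_(a < b) 2).
  apply: multiplier_prod => [b _|b _]; last by apply: prod_ge0 => a _; lra.
  by apply: multiplier_prod => [a _|a _]; [apply: multiplier_compl_diag | lra].
rewrite big1_eq in diags.
have := multiplier_mul Rle_0_1 diags separations; rewrite Rmult_1_l.
have compl b : 1 - (if b then 1 else 0) = if ~~ b then 1 else 0 by case: b => /=; ring.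
apply: multiplier_ext => i; rewrite /indic Lset_blocks // (distinct_pairs_enum _ set0).
  rewrite /blk prod_indicator.
  under [X in _ * X]eq_bigr => b _ do under eq_bigr => a _ do rewrite compl.
  under [X in _ * X]eq_bigr => b _ do rewrite prod_indicator.
  rewrite prod_indicator /=.
  by rewrite indicator_andb.
by move=> T T'; rewrite setUC.
Qed.

End SliceNorm.

Lemma admissibleP n d (I : {set 'I_d}) (i0 : Idx n d) (C : {set Idx n d}) :
  admissible I i0 C <-> forall J, partition J (~: I) -> multiplier I i0 J (indic C) 1.
Proof.
split=> [adm J HJ A | mult A J HJ]; first by rewrite Rmult_1_l; apply: adm.
by have := mult J HJ A; rewrite Rmult_1_l.
Qed.

Lemma prod_pairs_const c m :
  \big[Rmult/1]_(b < m) \big[Rmult/1]_(a < b) c = c ^ (m * (m - 1) %/ 2).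
Proof.
rewrite subn1 divn2 -bin2 -bin2_sum big_mkord.
elim: m => [|m IH]; first by rewrite !big_ord0.
rewrite !big_ord_recr /= IH pow_add big_const_ord; congr (_ * _).
by elim: (m : nat) => //= k ->.
Qed.

Theorem lemma6p5 (n d : nat) (I : {set 'I_d}) (i0 : Idx n d) :
  (* (1) generalized rows *)
  (forall (K : {set 'I_d}) (j : 'I_d -> 'I_n), admissible I i0 (genRow K j)) /\
  (* (2) generalized diagonals *)
  (forall K : {set 'I_d}, admissible I i0 (genDiag n K)) /\
  (* (3) closure under intersection *)
  (forall C1 C2 : {set Idx n d}, admissible I i0 C1 -> admissible I i0 C2 ->
     admissible I i0 (C1 :&: C2)) /\
  (* (4) *)
  (forall (A : tensor n d) (Kp : {set {set 'I_d}}) (J : {set {set 'I_d}}),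
     partition Kp [set: 'I_d] -> partition J (~: I) ->
     (sliceNorm I i0 (hadamard A (indic (Lset n Kp))) J
        <= 2 ^ ((#|Kp| * (#|Kp| - 1)) %/ 2) * sliceNorm I i0 A J)%R) /\
  (* (5) *)
  (forall (A : tensor n d) (v : 'I_d -> 'I_n -> R) (J : {set {set 'I_d}}),
     partition J (~: I) ->
     (sliceNorm I i0 (hadamard A (tprod v)) J
        <= sliceNorm I i0 A J * \big[Rmult/1%R]_(k < d) infnorm (v k))%R).
Proof.
split; [|split; [|split; [|split]]].
- by move=> K j; apply/admissibleP => J HJ; apply: multiplier_row.
- by move=> K; apply/admissibleP => J HJ; apply: multiplier_diag.
- move=> C1 C2 /admissibleP adm1 /admissibleP adm2; apply/admissibleP => J HJ.
  have := multiplier_mul Rle_0_1 (adm1 J HJ) (adm2 J HJ); rewrite Rmult_1_l.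
  by apply: multiplier_ext => i; rewrite /indic inE indicator_andb.
- by move=> A Kp J HK HJ; rewrite -prod_pairs_const; apply: multiplier_Lset.
- by move=> A v J HJ; rewrite Rmult_comm; apply: multiplier_tprod.
Qed.
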